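(* Suppose that for every $c\in\{1,\dots,K-1\}$, $$\bar p_c(\bm x,\bar Y)=\binom{K-1}{c}^{-1}\sum_{y\notin \bar Y}p(\bm x,y)\qquad(\bm x\in\mathcal X,\ \bar Y\in\overline{\mathcal Y}_c).$$ Let $\gamma\in[0,1]$ and let $\bm\alpha$ satisfy $\alpha_c\ge0$, $\sum_{c=1}^{K-1}\alpha_c=1$. Define the multi-complementary and unlabeled risk $R_{\mathrm{MCUL}}(\bm g)=\sum_{c=1}^{K-1}\alpha_c R^u_c(\bm g)$, where $$R^u_c(\bm g)=\mathbb E_{\bar p_c(\bm x,\bar Y)}\Big[(1-\gamma)\mathcal L(\bm g(\bm x))-\frac{K-1}{c}\sum_{y\in\bar Y}\ell(\bm g(\bm x),y)\Big]+\gamma\,\mathbb E_{p(\bm x)}\big[\mathcal L(\bm g(\bm x))\big].$$ Then for any loss $\ell$ and decision function $\bm g$ (with finite expectations), $R_{\mathrm{MCUL}}(\bm g)=R(\bm g)$.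
   Context: Let $K\ge 2$, $\mathcal X\subseteq\mathbb R^d$ the feature space and $\mathcal Y=\{1,\dots,K\}$ the label space. Let $p(\bm x,y)$ be a joint density on $\mathcal X\times\mathcal Y$ with marginal density $p(\bm x)$. For $c\in\{1,\dots,K-1\}$, $\overline{\mathcal Y}_c$ denotes the collection of all $c$-element subsets of $\{1,\dots,K\}$, and $\bar p_c(\bm x,\bar Y)$ is a density on $\mathcal X\times\overline{\mathcal Y}_c$. A decision function is a map $\bm g:\mathcal X\to\mathbb R^K$, a loss is a function $\ell:\mathbb R^K\times\mathcal Y\to[0,\infty)$, the classification risk is $R(\bm g)=\mathbb E_{p(\bm x,y)}[\ell(\bm g(\bm x),y)]$, and the cumulative loss is $\mathcal L(\bm g(\bm x))=\sum_{y=1}^K\ell(\bm g(\bm x),y)$. *)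

From HB Require Import structures.
From mathcomp Require Import all_boot all_order all_algebra.
Set Implicit Arguments. Unset Strict Implicit. Unset Printing Implicit Defensive.
Import Order.TTheory GRing.Theory Num.Theory.
Local Open Scope ring_scope.

(* Labels {1..K} are 'I_K; c-element label subsets are {set 'I_K} with #|Y| = c.
   Integration over the feature space X is an abstract functional [I], linear
   on a class [Int] of integrable functions (closed under + and scaling).
   Any Lebesgue integral w.r.t. the reference measure is such a functional. *)

Definition integral_functional (R : ringType) (X : Type)
  (Int : (X -> R) -> Prop) (I : (X -> R) -> R) : Prop :=
  (forall f g, Int f -> Int g ->
     Int (fun x => f x + g x) /\ I (fun x => f x + g x) = I f + I g) /\
  (forall (a : R) f, Int f ->
     Int (fun x => a * f x) /\ I (fun x => a * f x) = a * I f).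

Definition cumloss (R : ringType) (K : nat) (ell : 'rV[R]_K -> 'I_K -> R)
  (v : 'rV[R]_K) : R := \sum_(y : 'I_K) ell v y.

Definition marginal (R : ringType) (X : Type) (K : nat) (p : X -> 'I_K -> R)
  (x : X) : R := \sum_(y : 'I_K) p x y.

Definition E_joint (R : ringType) (X : Type) (K : nat) (I : (X -> R) -> R)
  (p : X -> 'I_K -> R) (F : X -> 'I_K -> R) : R :=
  I (fun x => \sum_(y : 'I_K) p x y * F x y).

Definition E_bar (R : ringType) (X : Type) (K : nat) (I : (X -> R) -> R)
  (c : nat) (pc : X -> {set 'I_K} -> R) (F : X -> {set 'I_K} -> R) : R :=
  I (fun x => \sum_(Y : {set 'I_K} | #|Y| == c) pc x Y * F x Y).

Definition risk (R : ringType) (X : Type) (K : nat) (I : (X -> R) -> R)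
  (p : X -> 'I_K -> R) (ell : 'rV[R]_K -> 'I_K -> R) (g : X -> 'rV[R]_K) : R :=
  E_joint I p (fun x y => ell (g x) y).

Definition ru_integrand (R : fieldType) (X : Type) (K : nat) (gamma : R) (c : nat)
  (ell : 'rV[R]_K -> 'I_K -> R) (g : X -> 'rV[R]_K) (x : X) (Y : {set 'I_K}) : R :=
  (1 - gamma) * cumloss ell (g x)
  - (K.-1)%:R / c%:R * \sum_(y in Y) ell (g x) y.

Definition risk_u (R : fieldType) (X : Type) (K : nat) (I : (X -> R) -> R)
  (p : X -> 'I_K -> R) (pbar : nat -> X -> {set 'I_K} -> R) (gamma : R) (c : nat)
  (ell : 'rV[R]_K -> 'I_K -> R) (g : X -> 'rV[R]_K) : R :=
  E_bar I c (pbar c) (ru_integrand gamma c ell g)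
  + gamma * I (fun x => marginal p x * cumloss ell (g x)).

Definition risk_MCUL (R : fieldType) (X : Type) (K : nat) (I : (X -> R) -> R)
  (p : X -> 'I_K -> R) (pbar : nat -> X -> {set 'I_K} -> R) (gamma : R)
  (alpha : nat -> R) (ell : 'rV[R]_K -> 'I_K -> R) (g : X -> 'rV[R]_K) : R :=
  \sum_(1 <= c < K) alpha c * risk_u I p pbar gamma c ell g.

From HB Require Import structures.
From mathcomp Require Import all_boot all_order all_algebra.
From mathcomp Require Import ring zify.
From Stdlib Require Import FunctionalExtensionality.
Set Implicit Arguments. Unset Strict Implicit. Unset Printing Implicit Defensive.
Import Order.TTheory GRing.Theory Num.Theory.
Local Open Scope ring_scope.

(* Among the c-element label sets, 'C(K-1, c) avoid a given label y and
   'C(K-2, c-1) contain y while avoiding another label y'.  Hence, pointwise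
   in x, the expectation under pbar_c of (1 - gamma) L - (K-1)/c sum_{y in Ybar} ell y
   is (1 - gamma) p(x) L - (p(x) L - sum_y p(x,y) ell y), by
   (K-1) 'C(K-2, c-1) = c 'C(K-1, c).  The term gamma p(x) L of R^u_c cancels
   what remains, so every R^u_c equals R, and so does their convex
   combination. *)

Section Draws.

Variable T : finType.

Lemma card_draws_notin (c : nat) (y : T) :
  #|[set Y : {set T} | (#|Y| == c) && (y \notin Y)]| = 'C(#|T|.-1, c).
Proof.
rewrite -(cardsC1 y) -cards_draws.
by apply: eq_card => Y; rewrite !inE subsetC sub1set inE andbC.
Qed.

Lemma card_draws_in_notin (c : nat) (y y' : T) : (0 < c)%N -> y != y' ->
  #|[set Y : {set T} | (#|Y| == c) && (y' \notin Y) && (y \in Y)]|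
  = 'C(#|T|.-2, c.-1).
Proof.
move=> c_gt0 neq_yy'.
set A := [set Y : {set T} | (#|Y| == c) && (y' \notin Y)].
have cardTyy' : #|~: [set y; y']| = #|T|.-2.
  by rewrite cardsCs setCK cards2 neq_yy' subn2.
have cardA_noty : #|A :\: [set Y : {set T} | y \in Y]| = 'C(#|T|.-2, c).
  rewrite -cardTyy' -cards_draws; apply: eq_card => Y.
  rewrite !inE subsetC subUset !sub1set !inE.
  by case: (#|Y| == c); case: (y \in Y); case: (y' \in Y).
have -> : [set Y : {set T} | (#|Y| == c) && (y' \notin Y) && (y \in Y)]
          = A :&: [set Y : {set T} | y \in Y].
  by apply/setP => Y; rewrite !inE.
have := cardsID [set Y : {set T} | y \in Y] A.
rewrite cardA_noty (card_draws_notin _ y').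
have two_le_T : (1 < #|T|)%N.
  by rewrite (cardD1 y) (cardD1 y') !inE eq_sym neq_yy'.
have -> : #|T|.-1 = (#|T|.-2).+1 by case: #|T| two_le_T => [|[|n]].
clearbody A; case: c c_gt0 cardA_noty => // c _ _; rewrite binS addnC => /eqP.
by rewrite eqn_add2l => /eqP.
Qed.

Lemma sum_draws_notin (R : nmodType) (c : nat) (f : T -> R) :
  \sum_(Y : {set T} | #|Y| == c) \sum_(y | y \notin Y) f y
  = (\sum_y f y) *+ 'C(#|T|.-1, c).
Proof.
under eq_bigr => Y _ do rewrite big_mkcond /=.
rewrite exchange_big /= -sumrMnl; apply: eq_bigr => y _.
rewrite -big_mkcondr /= -(card_draws_notin _ y) -sumr_const.
by apply: eq_bigl => Y; rewrite inE.
Qed.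

Lemma sum_draws_notin_mul_in (R : pzRingType) (c : nat) (f e : T -> R) :
  (0 < c)%N ->
  \sum_(Y : {set T} | #|Y| == c) ((\sum_(y' | y' \notin Y) f y') * \sum_(y in Y) e y)
  = ((\sum_y f y) * (\sum_y e y) - \sum_y f y * e y) *+ 'C(#|T|.-2, c.-1).
Proof.
move=> c_gt0.
have expand (Y : {set T}) : (\sum_(y' | y' \notin Y) f y') * \sum_(y in Y) e y
    = \sum_y' \sum_y (if y' \notin Y then if y \in Y then f y' * e y else 0 else 0).
  rewrite big_distrl /= big_mkcond /=; apply: eq_bigr => y' _.
  by case: (y' \notin Y); [rewrite big_distrr /= big_mkcond | rewrite big1].
under eq_bigr => Y _ do rewrite expand.
rewrite exchange_big /= big_distrl /= -sumrB -sumrMnl; apply: eq_bigr => y' _.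
rewrite exchange_big /= (bigD1 y') //= big1 ?add0r; last first.
  by move=> Y _; case: ifP => // /negbTE ->.
have -> : f y' * \sum_y e y - f y' * e y' = \sum_(y | y != y') f y' * e y.
  by rewrite (bigD1 y') //= mulrDr addrAC subrr add0r mulr_sumr.
rewrite -sumrMnl; apply: eq_bigr => y neq_yy'.
rewrite -!big_mkcondr /= -(card_draws_in_notin c_gt0 neq_yy') -sumr_const.
by apply: eq_bigl => Y; rewrite inE.
Qed.

Lemma expect_uniform_draws (R : numFieldType) (gamma : R) (c : nat)
    (w v : T -> R) : (0 < c < #|T|)%N ->
  \sum_(Y : {set T} | #|Y| == c)
     ('C(#|T|.-1, c)%:R^-1 * \sum_(y | y \notin Y) w y) *
     ((1 - gamma) * \sum_y v y - (#|T|.-1)%:R / c%:R * \sum_(y in Y) v y)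
  = \sum_y w y * v y - gamma * ((\sum_y w y) * \sum_y v y).
Proof.
case/andP=> c_gt0 c_ltT.
set N : R := 'C(#|T|.-1, c)%:R; set M : R := 'C(#|T|.-2, c.-1)%:R.
have N_neq0 : N != 0 by rewrite /N pnatr_eq0 -lt0n bin_gt0; lia.
have M_neq0 : M != 0 by rewrite /M pnatr_eq0 -lt0n bin_gt0; lia.
have c_neq0 : (c%:R : R) != 0 by rewrite pnatr_eq0 -lt0n.
have bin_diag : (#|T|.-1)%:R * M = c%:R * N.
  by rewrite -!natrM mul_bin_diag prednK.
rewrite (eq_bigr (fun Y : {set T} =>
    N^-1 * ((1 - gamma) * \sum_y v y) * \sum_(y | y \notin Y) w y
    - N^-1 * ((#|T|.-1)%:R / c%:R)
        * ((\sum_(y | y \notin Y) w y) * \sum_(y in Y) v y))); last first.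
  move=> Y _; rewrite mulrBr mulrAC; congr (_ - _).
  by rewrite -!mulrA; congr (_ * _); rewrite mulrCA; congr (_ * _); rewrite mulrCA.
rewrite sumrB -!mulr_sumr sum_draws_notin sum_draws_notin_mul_in //.
rewrite -[_ *+ 'C(#|T|.-1, c)]mulr_natr -[_ *+ 'C(#|T|.-2, c.-1)]mulr_natr -/N -/M.
clearbody N M.
move: (#|T|.-1)%:R (c%:R : R) c_neq0 bin_diag => K1 C C_neq0 bin_diag.
have -> : K1 = C * N / M by rewrite -bin_diag mulfK.
by field; rewrite C_neq0 N_neq0 M_neq0.
Qed.

End Draws.

Lemma integral_functional_combine (R : nzRingType) (X : Type)
    (Int : (X -> R) -> Prop) (I : (X -> R) -> R) (a : R) (f h : X -> R) :
  integral_functional Int I -> Int f -> Int h ->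
  I (fun x => f x + a * h x) = I f + a * I h.
Proof.
move=> [I_add I_scale] Int_f Int_h.
have [Int_ah I_ah] := I_scale a h Int_h.
by have [_ ->] := I_add f _ Int_f Int_ah; rewrite I_ah.
Qed.

Theorem theorem2 (R : realFieldType) (X : Type) (K : nat)
  (Int : (X -> R) -> Prop) (I : (X -> R) -> R)
  (p : X -> 'I_K -> R) (pbar : nat -> X -> {set 'I_K} -> R)
  (gamma : R) (alpha : nat -> R)
  (ell : 'rV[R]_K -> 'I_K -> R) (g : X -> 'rV[R]_K) :
  (2 <= K)%N ->
  integral_functional Int I ->
  (* p is a joint density *)
  (forall x y, 0 <= p x y) ->
  Int (marginal p) -> I (marginal p) = 1 ->
  (* assumed generation of complementary labels *)
  (forall c, (1 <= c < K)%N -> forall x (Y : {set 'I_K}), #|Y| = c ->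
     pbar c x Y = ('C(K.-1, c))%:R^-1 * \sum_(y | y \notin Y) p x y) ->
  0 <= gamma <= 1 ->
  (forall c, (1 <= c < K)%N -> 0 <= alpha c) ->
  \sum_(1 <= c < K) alpha c = 1 ->
  (* ell is a loss *)
  (forall v y, 0 <= ell v y) ->
  (* finite expectations *)
  (forall c, (1 <= c < K)%N ->
     Int (fun x => \sum_(Y : {set 'I_K} | #|Y| == c)
                      pbar c x Y * ru_integrand gamma c ell g x Y)) ->
  Int (fun x => marginal p x * cumloss ell (g x)) ->
  Int (fun x => \sum_(y : 'I_K) p x y * ell (g x) y) ->
  risk_MCUL I p pbar gamma alpha ell g = risk I p ell g.
Proof.
move=> _ I_lin _ _ _ pbar_unif _ _ alpha_sum1 _ _ Int_pL Int_risk.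
have risk_uE c : (1 <= c < K)%N -> risk_u I p pbar gamma c ell g = risk I p ell g.
  move=> c_range; rewrite /risk_u /E_bar /risk /E_joint.
  have -> : (fun x => \sum_(Y : {set 'I_K} | #|Y| == c)
                        pbar c x Y * ru_integrand gamma c ell g x Y)
      = (fun x => \sum_y p x y * ell (g x) y
                  + - gamma * (marginal p x * cumloss ell (g x))).
    apply: functional_extensionality => x.
    have := expect_uniform_draws gamma (p x) (ell (g x)).
    rewrite card_ord mulNr => /(_ c c_range) <-.
    by apply: eq_bigr => Y /eqP cardY; rewrite pbar_unif.
  by rewrite (integral_functional_combine _ I_lin Int_risk Int_pL) mulNr addrNK.
rewrite /risk_MCUL (eq_big_nat _ _ (F2 := fun c => alpha c * risk I p ell g)).
  by rewrite -mulr_suml alpha_sum1 mul1r.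
by move=> c c_range; rewrite risk_uE.
Qed.
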